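(* Let $G_{wy}$ and $G_{zx}$ be Lagrangian grid diagrams of the same size $n$ (in the $(w,y)$-plane and the $(z,x)$-plane respectively) such that $|\Delta t(c_i)|\neq|\Delta t(c'_j)|$ for every crossing $c_i$ of $G_{wy}$ and every crossing $c'_j$ of $G_{zx}$. Then there is a Lagrangian hypercube diagram whose $wy$- and $zx$-projections are $G_{wy}$ and $G_{zx}$.
   Context: Grid conventions. In a plane with coordinates $(a,b)$ (here $(a,b)=(w,y)$ or $(a,b)=(z,x)$), an immersed grid diagram of size $n$ is an $n\times n$ grid of unit cells in $[0,n]^2$ with two kinds of markings at centers of cells, each row and each column containing exactly one marking of each kind; joining each marking of the first kind to the marking of the second kind in its row by an $a$-parallel segment, and each marking of the second kind to the marking of the first kind in its column by a $b$-parallel segment, gives an oriented connected closed piecewise-linear curve, with no crossing information, viewed as an immersion $\gamma:\mathbb{R}/2\pi\mathbb{Z}\to\mathbb{R}^2$, $\theta\mapsto(a(\theta),b(\theta))$. It is a Lagrangian grid diagram if (1) $\int_0^{2\pi}b\,a'\,d\theta=0$ and (2) $\int_{\theta_0}^{\theta_1}b\,a'\,d\theta\neq0$ whenever $\theta_0\neq\theta_1$ and $\gamma(\theta_0)=\gamma(\theta_1)$. For a crossing $c=\gamma(\theta_0)=\gamma(\theta_1)$ put $|\Delta t(c)|=|\int_{\theta_0}^{\theta_1}b\,a'\,d\theta|$. Hypercube diagrams. Let $C=[0,n]^4$ with coordinates $(w,x,y,z)$. A flat is a product in which two coordinates range over $[0,n]$ and the other two over unit intervals $[k,k+1]$, named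 by its two full coordinates; a cube is a product in which three coordinates range over $[0,n]$ and one over a unit interval. Markings are points with coordinates in $\mathbb{Z}+\frac12$ labelled $W,X,Y,Z$. Marking conditions: each cube contains exactly one marking of each label; each cube contains exactly two flats containing exactly three markings; in each such flat the three markings form a right angle with rays parallel to coordinate axes; its vertex is $W$ iff the flat is a $zw$-flat, $X$ iff a $wx$-flat, $Y$ iff an $xy$-flat, $Z$ iff a $yz$-flat. Join each $W$ to an $X$ by a $w$-parallel segment, each $X$ to a $Y$ by an $x$-parallel segment, each $Y$ to a $Z$ by a $y$-parallel segment and each $Z$ to a $W$ by a $z$-parallel segment; the projections of this curve to the $(w,y)$- and $(z,x)$-planes are immersed grid diagrams (the $wy$- and $zx$-projections). A Lagrangian hypercube diagram is such a marked hypercube satisfying the marking conditions whose two projections are Lagrangian grid diagrams with $|\Delta t(c)|\neq|\Delta t(c')|$ for all crossings $c$ of the $zx$-projection and $c'$ of the $wy$-projection. *)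

From HB Require Import structures.
From mathcomp Require Import all_boot all_order all_algebra.
From mathcomp Require Import reals.
Set Implicit Arguments. Unset Strict Implicit. Unset Printing Implicit Defensive.
Import Order.TTheory GRing.Theory Num.Theory.
Local Open Scope ring_scope.

(* A cell is a pair (i,j) : 'I_n * 'I_n, the cell [i,i+1] x [j,j+1]; a        *)
(* marking in that cell sits at its center (i + 1/2, j + 1/2).               *)
(* 'i' is the column (a-index), 'j' the row (b-index).                        *)
(* A grid of size n is the pair (first-kind markings, second-kind markings). *)
Definition cell n := ('I_n * 'I_n)%type.
Definition grid n := ({set cell n} * {set cell n})%type.

Definition one_per_line n (S : {set cell n}) : Prop :=
  (forall r : 'I_n, #|[set p in S | p.2 == r]| = 1%N) /\
  (forall c : 'I_n, #|[set p in S | p.1 == c]| = 1%N).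

(* A traversal of the curve of G: the cyclic list of its 2n corners
   v 0 (first kind), v 1 (second kind), v 2 (first kind), ...; from a
   first-kind marking one moves a-parallel (same row) to the second-kind
   marking, from a second-kind marking b-parallel (same column) to the next
   first-kind marking. Indices are taken mod 2n (ordS). *)
Definition traversal n (G : grid n) (v : 'I_(n.*2) -> cell n) : Prop :=
  injective v /\
  forall i : 'I_(n.*2),
    if ~~ odd i then (v i \in G.1) /\ ((v (ordS i)).2 = (v i).2)
    else (v i \in G.2) /\ ((v (ordS i)).1 = (v i).1).

(* An immersed grid diagram: markings one per row/column of each kind, the two
   kinds never share a cell (segments are non-degenerate), and the curve is a
   single closed component (a traversal visiting all 2n markings exists). *)
Definition immersed_grid n (G : grid n) : Prop :=
  (0 < n)%N /\ one_per_line G.1 /\ one_per_line G.2 /\ G.1 :&: G.2 = set0 /\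
  exists v, traversal G v.

Section Curve.
Variable R : realType.

Definition ccoord n (i : 'I_n) : R := (i%:R + 2^-1).

Definition vtx n (v : 'I_(n.*2) -> cell n) (k : 'I_(n.*2)) : R * R :=
  (ccoord (v k).1, ccoord (v k).2).

(* The curve is parametrized segment by segment: parameter (k, t), with
   k : 'I_(2n) and t in [0,1), is the point vtx k + t (vtx (k+1) - vtx k);
   this is a reparametrization of gamma : R/2piZ -> R^2 (theta = pi (k+t)/n). *)
Definition gam n (v : 'I_(n.*2) -> cell n) (k : 'I_(n.*2)) (t : R) : R * R :=
  let P := vtx v k in let Q := vtx v (ordS k) in
  (P.1 + t * (Q.1 - P.1), P.2 + t * (Q.2 - P.2)).

(* int_0^t b a' du along segment k (exact value for the linear segment) *)
Definition segint n (v : 'I_(n.*2) -> cell n) (k : 'I_(n.*2)) (t : R) : R :=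
  let P := vtx v k in let Q := vtx v (ordS k) in
  (Q.1 - P.1) * (P.2 * t + (Q.2 - P.2) * t ^+ 2 / 2).

Definition prim n (v : 'I_(n.*2) -> cell n) (k : 'I_(n.*2)) (t : R) : R :=
  \sum_(i < n.*2 | (i < k)%N) segint v i 1 + segint v k t.

Definition total n (v : 'I_(n.*2) -> cell n) : R :=
  \sum_(i < n.*2) segint v i 1.

Definition is_crossing n (v : 'I_(n.*2) -> cell n)
  (k0 : 'I_(n.*2)) (t0 : R) (k1 : 'I_(n.*2)) (t1 : R) : Prop :=
  0 <= t0 < 1 /\ 0 <= t1 < 1 /\ (k0, t0) <> (k1, t1) /\
  gam v k0 t0 = gam v k1 t1.

(* Delta t = int_{theta0}^{theta1} b a' dtheta *)
Definition delta_t n (v : 'I_(n.*2) -> cell n)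
  (k0 : 'I_(n.*2)) (t0 : R) (k1 : 'I_(n.*2)) (t1 : R) : R :=
  prim v k1 t1 - prim v k0 t0.

Definition lagrangian_grid n (G : grid n) : Prop :=
  immersed_grid G /\
  forall v, traversal G v ->
    total v = 0 /\
    forall k0 t0 k1 t1, is_crossing v k0 t0 k1 t1 -> delta_t v k0 t0 k1 t1 != 0.

Definition crossings_separated n (G G' : grid n) : Prop :=
  forall v v', traversal G v -> traversal G' v' ->
  forall k0 t0 k1 t1 k0' t0' k1' t1',
    is_crossing v k0 t0 k1 t1 -> is_crossing v' k0' t0' k1' t1' ->
    `|delta_t v k0 t0 k1 t1| != `|delta_t v' k0' t0' k1' t1'|.

End Curve.

(* half-integer coordinates is p : {ffun 'I_4 -> 'I_n} (coordinate c equals   *)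
(* p c + 1/2). Labels W,X,Y,Z are also indexed by cw,cx,cy,cz.                *)
(* A marked hypercube is mk : 'I_4 -> {set hpt n}, mk l = markings labelled l.*)
Definition cw : 'I_4 := @Ordinal 4 0 isT.
Definition cx : 'I_4 := @Ordinal 4 1 isT.
Definition cy : 'I_4 := @Ordinal 4 2 isT.
Definition cz : 'I_4 := @Ordinal 4 3 isT.

Definition hpt n := {ffun 'I_4 -> 'I_n}.
Definition marking_fn n := 'I_4 -> {set hpt n}.

Definition markings n (mk : marking_fn n) : {set 'I_4 * hpt n} :=
  [set m | m.2 \in mk m.1].

(* markings in the flat where coordinate d lies in [j,j+1] and e in [k,k+1]
   (d <> e); its two full coordinates are the other two. *)
Definition flat_marks n (mk : marking_fn n) (d : 'I_4) (j : 'I_n)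
  (e : 'I_4) (k : 'I_n) : {set 'I_4 * hpt n} :=
  [set m in markings mk | (m.2 d == j) && (m.2 e == k)].

Definition right_angle n (m0 m1 m2 : 'I_4 * hpt n) : Prop :=
  exists c1 c2 : 'I_4, c1 != c2 /\
    (forall c, (m1.2 c != m0.2 c) = (c == c1)) /\
    (forall c, (m2.2 c != m0.2 c) = (c == c2)).

Definition marking_conditions n (mk : marking_fn n) : Prop :=
  (forall (l d : 'I_4) (j : 'I_n), #|[set p in mk l | p d == j]| = 1%N) /\
  (* each cube contains exactly two flats with exactly three markings; a flat
     in cube (d,j) is determined by its other fixed coordinate e <> d and k *)
  (forall (d : 'I_4) (j : 'I_n),
     #|[set ek : 'I_4 * 'I_n | (ek.1 != d) &&
                               (#|flat_marks mk d j ek.1 ek.2| == 3%N)]| = 2%N) /\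
  (forall (d e : 'I_4) (j k : 'I_n), d != e ->
     #|flat_marks mk d j e k| = 3%N ->
     let F := [set c : 'I_4 | (c != d) && (c != e)] in
     exists m0 m1 m2,
       flat_marks mk d j e k = [set m0; m1; m2] /\ right_angle m0 m1 m2 /\
       (m0.1 == cw) = (F == [set cz; cw]) /\
       (m0.1 == cx) = (F == [set cw; cx]) /\
       (m0.1 == cy) = (F == [set cx; cy]) /\
       (m0.1 == cz) = (F == [set cy; cz])).

(* wy-projection: (a,b) = (w,y); first kind = W (= Z projected), second kind
   = X (= Y projected). *)
Definition proj_wy n (mk : marking_fn n) : grid n :=
  ([set ((p cw), (p cy)) | p : hpt n in mk cw], [set ((p cw), (p cy)) | p : hpt n in mk cx]).

(* zx-projection: (a,b) = (z,x); first kind = Z (= Y projected), second kind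
   = W (= X projected). *)
Definition proj_zx n (mk : marking_fn n) : grid n :=
  ([set ((p cz), (p cx)) | p : hpt n in mk cz], [set ((p cz), (p cx)) | p : hpt n in mk cw]).

Definition lagrangian_hypercube (R : realType) n (mk : marking_fn n) : Prop :=
  marking_conditions mk /\
  lagrangian_grid R (proj_wy mk) /\ lagrangian_grid R (proj_zx mk) /\
  crossings_separated R (proj_zx mk) (proj_wy mk).

From HB Require Import structures.
From mathcomp Require Import all_boot all_order all_algebra.
From mathcomp Require Import reals.
From mathcomp Require Import zify.
Set Implicit Arguments. Unset Strict Implicit. Unset Printing Implicit Defensive.
Import GRing.Theory.

(* Write the traversal v of G_wy as the corners (w_q, y_q), (w_(q+1), y_q) and the
   traversal u of G_zx as (z_q, x_q), (z_(q+1), x_q). Interleaving them gives the closed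
   curve through the 4n markings
     W_q = (w_q, x_q, y_q, z_(q+1)),          X_q = (w_(q+1), x_q, y_q, z_(q+1)),
     Y_q = (w_(q+1), x_(q+1), y_q, z_(q+1)),  Z_q = (w_(q+1), x_(q+1), y_(q+1), z_(q+1)),
   along which the step leaving a marking labelled c moves the coordinate c only. Its
   projections are G_wy and G_zx, so the Lagrangian and separation conditions are
   inherited. Each of w, x, y, z is injective mod n (one marking per row and column), so a
   cube contains exactly four consecutive markings, along which the three other coordinates
   move once each, in cyclic order. A flat of the cube holds three of them exactly when its
   fixed coordinate moves at the first or the last of the three steps: this gives the two
   flats, each a right angle at its middle marking with the prescribed label. *)

Lemma ord4P (c : 'I_4) : c = cw \/ c = cx \/ c = cy \/ c = cz.
Proof.
case: c => [[|[|[|[|m]]]] h];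
  [left|right;left|right;right;left|right;right;right|by []]; exact: val_inj.
Qed.

Lemma card_ord4 (P : pred 'I_4) :
  #|[set i | P i]| = (P cw + P cx + P cy + P cz)%N.
Proof.
rewrite cardsE -sum1_card big_mkcond /= !big_ord_recl big_ord0 addn0 !addnA.
have ->: lift ord0 (lift ord0 (lift ord0 ord0)) = cz :> 'I_4 by apply: val_inj.
have ->: lift ord0 (lift ord0 ord0) = cy :> 'I_4 by apply: val_inj.
have ->: lift ord0 ord0 = cx :> 'I_4 by apply: val_inj.
have ->: ord0 = cw :> 'I_4 by apply: val_inj.
by rewrite /in_mem /=; case: (P cw); case: (P cx); case: (P cy); case: (P cz).
Qed.

Lemma eq_set4 (A B : {set 'I_4}) : (A == B) =
  [&& (cw \in A) == (cw \in B), (cx \in A) == (cx \in B),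
      (cy \in A) == (cy \in B) & (cz \in A) == (cz \in B)].
Proof.
apply/eqP/and4P => [->|[/eqP h1 /eqP h2 /eqP h3 /eqP h4]]; first by rewrite !eqxx.
by apply/setP => c; case: (ord4P c) => [->|[->|[->|->]]].
Qed.

Lemma eq_addr_natr4 (l : 'I_4) (t : nat) (s : 'I_4) :
  (t < 4)%N -> (l + t%:R == l + s)%R = (t == s).
Proof. by move=> t4; rewrite (inj_eq (addrI l)) Zp_nat -val_eqE /= modn_small. Qed.

Lemma vertex_label (L : 'I_4) :
  let F := [set c | (c != L + 1)%R && (c != L + 2%:R)%R] in
  [/\ (L == cw) = (F == [set cz; cw]), (L == cx) = (F == [set cw; cx]),
      (L == cy) = (F == [set cx; cy]) & (L == cz) = (F == [set cy; cz])].
Proof. by case: (ord4P L) => [->|[->|[->|->]]]; rewrite /= !eq_set4 !inE. Qed.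

Lemma imset_set3 (T U : finType) (f : T -> U) a b c :
  f @: [set a; b; c] = [set f a; f b; f c].
Proof. by rewrite !imsetU !imset_set1. Qed.

Section Staircase.

Variables (n : nat) (mark : nat -> 'I_4 * hpt n).
Hypothesis mark_labelS : forall y, (mark y.+1).1 = ((mark y).1 + 1)%R.
Hypothesis mark_stepS :
  forall y c, ((mark y.+1).2 c != (mark y).2 c) = (c == (mark y).1).

Lemma mark_labelD y i : (mark (y + i)).1 = ((mark y).1 + i%:R)%R.
Proof.
elim: i => [|i IH]; first by rewrite addn0 addr0.
by rewrite addnS mark_labelS IH mulrSr addrA.
Qed.

Lemma mark_coord_eq y i c :
  (forall t, (t < i)%N -> c != (mark (y + t)).1) ->
  (mark (y + i)).2 c = (mark y).2 c.
Proof.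
elim: i => [|i IH] hc; first by rewrite addn0.
rewrite addnS.
have /negbFE/eqP -> : ((mark (y + i).+1).2 c != (mark (y + i)).2 c) = false.
  by rewrite mark_stepS; apply/negbTE/hc.
by rewrite IH // => t ti; apply: hc; rewrite ltnS ltnW.
Qed.

Lemma mark_right_angle y : right_angle (mark y.+1) (mark y) (mark y.+2).
Proof.
exists (mark y).1, (mark y.+1).1; split; [|split] => [|c|c].
- by rewrite mark_labelS -{1}[(mark y).1]addr0 (inj_eq (addrI _)).
- by rewrite eq_sym mark_stepS.
- exact: mark_stepS.
Qed.

Variable y0 : nat.
Let l := (mark y0).1.
Let P i := (mark (y0 + i)).2.

Lemma cube_label (i : 'I_4) : (mark (y0 + i)).1 = (l + i)%R.
Proof. by rewrite mark_labelD natr_Zp. Qed.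

Lemma cube_coord (s : 'I_4) i : (s < 3)%N -> (i < 4)%N ->
  P i (l + s)%R = if (i <= s)%N then P 0 (l + s)%R else P 3 (l + s)%R.
Proof.
move=> s3 i4; rewrite /P addn0; case: ifP => [le_is|/negbT lt_si].
  apply: mark_coord_eq => t ti.
  by rewrite mark_labelD eq_sym eq_addr_natr4; lia.
have -> : y0 + 3 = y0 + i + (3 - i) by lia.
rewrite [RHS]mark_coord_eq // => t ti.
by rewrite -addnA mark_labelD eq_sym eq_addr_natr4; lia.
Qed.

Lemma cube_coord_moves (s : 'I_4) : (s < 3)%N -> P 0 (l + s)%R != P 3 (l + s)%R.
Proof.
move=> s3.
have -> : P 0 (l + s)%R = P s (l + s)%R by rewrite [RHS]cube_coord ?leqnn //; lia.
have -> : P 3 (l + s)%R = P s.+1 (l + s)%R by rewrite [RHS]cube_coord ?ltnn //; lia.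
by rewrite /P addnS eq_sym mark_stepS mark_labelD natr_Zp.
Qed.

(* Coordinate [l + s] moves only between positions [s] and [s + 1], so a flat [l + s = k]
   meets the four markings in [s + 1] or [3 - s] of them. *)
Lemma cube_flat_card (s : 'I_4) k :
  (l + s != l + 3%:R)%R && (#|[set i : 'I_4 | P i (l + s)%R == k]| == 3) =
  (s == 0%R) && (P 3 (l + s)%R == k) || (s == 2%:R)%R && (P 0 (l + s)%R == k).
Proof.
rewrite (inj_eq (addrI l)) card_ord4 /=.
case: s => [[|[|[|[|//]]]] s4] //=; have := cube_coord_moves (s := Ordinal s4) isT;
  rewrite (cube_coord (i := 1)) ?(cube_coord (i := 2)) //=;
  by case: (P 0 _ =P k) => [->|_]; case: (P 3 _ =P k) => [->|_]; rewrite ?eqxx.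
Qed.

(* Only the coordinates [l], [l + 1], [l + 2] move along these four markings, so they lie
   in one cube of the coordinate [l + 3]. *)
Definition cube := [set mark (y0 + i) | i : 'I_4].

Lemma cube_mark_inj : injective (fun i : 'I_4 => mark (y0 + i)).
Proof. by move=> i j /(congr1 fst); rewrite !cube_label => /addrI. Qed.

Lemma cube_filterE (p : pred ('I_4 * hpt n)) :
  [set m in cube | p m] =
  (fun i : 'I_4 => mark (y0 + i)) @: [set i : 'I_4 | p (mark (y0 + i))].
Proof.
apply/setP => m; rewrite inE.
apply/andP/imsetP => [[/imsetP [i _ ->] pm]|[i]]; first by exists i; rewrite ?inE.
by rewrite inE => pi ->; split; first exact: imset_f.
Qed.

Lemma card_cube_filter (p : pred ('I_4 * hpt n)) :
  #|[set m in cube | p m]| = #|[set i : 'I_4 | p (mark (y0 + i))]|.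
Proof. by rewrite cube_filterE card_imset //; exact: cube_mark_inj. Qed.

Lemma cube_label_card l' : #|[set m in cube | m.1 == l']| = 1.
Proof.
rewrite card_cube_filter (_ : [set i | _] = [set l' - l]%R) ?cards1 //.
by apply/setP => i; rewrite !inE cube_label (addrC l) [RHS]eq_sym subr_eq eq_sym.
Qed.

Lemma cube_three_flats :
  #|[set ek : 'I_4 * 'I_n | (ek.1 != l + 3%:R)%R &&
                            (#|[set m in cube | m.2 ek.1 == ek.2]| == 3)]| = 2.
Proof.
rewrite (_ : [set ek | _] = [set (l + 0, P 3 (l + 0)); (l + 2%:R, P 0 (l + 2%:R))]%R).
  by rewrite cards2 xpair_eqE (inj_eq (addrI l)).
apply/setP => -[e k]; rewrite !inE /= card_cube_filter.
rewrite -[e](subrK l) [(e - l + l)%R]addrC cube_flat_card !xpair_eqE.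
rewrite !(inj_eq (addrI l)) !(eq_sym k).
by case: (e - l =P 0)%R => [-> //|_]; case: (e - l =P 2%:R)%R => [->|_].
Qed.

Lemma cube_flat_shape e k :
  (e != l + 3%:R)%R -> #|[set m in cube | m.2 e == k]| = 3 ->
  exists y, [set m in cube | m.2 e == k] = [set mark y.+1; mark y; mark y.+2] /\
    [set c | (c != l + 3%:R)%R && (c != e)] =
    [set c | (c != (mark y.+1).1 + 1)%R && (c != (mark y.+1).1 + 2%:R)%R].
Proof.
have -> : e = (l + (e - l))%R by rewrite addrC subrK.
move: (e - l)%R => s ed c3.
have /orP[/andP[/eqP-> /eqP<-]|/andP[/eqP-> /eqP<-]] :
  (s == 0%R) && (P 3 (l + s)%R == k) || (s == 2%:R)%R && (P 0 (l + s)%R == k).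
  by rewrite card_cube_filter in c3; rewrite -cube_flat_card ed /P c3.
- exists (y0 + 1); rewrite -addnS mark_labelD; split.
    rewrite cube_filterE (_ : [set i | _] = [set cy; cx; cz]) ?imset_set3 ?addnS //.
    apply/setP => i; rewrite !inE; have := cube_coord_moves (s := 0%R) isT.
    case: (ord4P i) => [->|[->|[->|->]]];
      rewrite /= ?(cube_coord (i := 1)) ?(cube_coord (i := 2)) //= ?eqxx //.
    by move/negbTE; apply.
  have -> : (l + 2%:R + 1 = l + 3%:R)%R by apply: val_inj => /=; lia.
  have -> : (l + 2%:R + 2%:R = l + 0)%R by apply: val_inj => /=; lia.
  by apply/setP => c; rewrite !inE andbC.
- exists y0; rewrite mark_labelS; split.
    rewrite cube_filterE (_ : [set i | _] = [set cx; cw; cy]) ?imset_set3 /=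
      ?addn0 ?addn1 ?addn2 //.
    apply/setP => i; rewrite !inE; have := cube_coord_moves (s := 2%:R%R) isT.
    case: (ord4P i) => [->|[->|[->|->]]];
      rewrite /= ?(cube_coord (i := 1)) ?(cube_coord (i := 2)) //= ?eqxx //.
    by rewrite eq_sym => /negbTE; apply.
  have -> : (l + 1 + 1 = l + 2%:R)%R by apply: val_inj => /=; lia.
  have -> : (l + 1 + 2%:R = l + 3%:R)%R by apply: val_inj => /=; lia.
  by apply/setP => c; rewrite !inE andbC.
Qed.

End Staircase.

Lemma fiber_card1_inj (T U : finType) (S : {set T}) (f : T -> U) :
  (forall r, #|[set p in S | f p == r]| = 1) -> {in S &, injective f}.
Proof.
move=> h p q pS qS fpq.
have /cards1P [z hz] : #|[set x in S | f x == f p]| == 1 by rewrite h.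
have : p \in [set x in S | f x == f p] by rewrite inE pS eqxx.
have : q \in [set x in S | f x == f p] by rewrite inE qS fpq eqxx.
by rewrite hz !inE => /eqP -> /eqP ->.
Qed.

Lemma one_per_line_card n (S : {set cell n}) : one_per_line S -> #|S| <= n.
Proof.
move=> [row _]; rewrite -(card_in_imset (fiber_card1_inj row)).
by rewrite -[X in _ <= X]card_ord max_card.
Qed.

Lemma one_per_line_imset n (S : {set cell n}) (f : 'I_n -> cell n) :
  one_per_line S -> injective f -> (forall i, f i \in S) -> [set f i | i : 'I_n] = S.
Proof.
move=> oS f_inj fS; apply/eqP; rewrite eqEcard; apply/andP; split.
  by apply/subsetP => p /imsetP [i _ ->].
by rewrite card_imset // card_ord one_per_line_card.
Qed.

Definition ord_mod n (n2_gt0 : 0 < n.*2) (a : nat) : 'I_(n.*2) :=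
  Ordinal (ltn_pmod a n2_gt0).

Lemma ord_mod_periodic n (n2_gt0 : 0 < n.*2) a :
  ord_mod n2_gt0 (a + n.*2) = ord_mod n2_gt0 a.
Proof. by apply: val_inj; rewrite /= modnDr. Qed.

Section Traversal.

Variables (n : nat) (n2_gt0 : 0 < n.*2) (G : grid n) (v : 'I_(n.*2) -> cell n).
Hypothesis trav : traversal G v.
Local Notation idx := (ord_mod n2_gt0).

Lemma ordS_mod a : ordS (idx a) = idx a.+1.
Proof. by apply: val_inj; rewrite /= -addn1 modnDml addn1. Qed.

Lemma traversal_step a :
  if ~~ odd a then v (idx a) \in G.1 /\ (v (idx a.+1)).2 = (v (idx a)).2
  else v (idx a) \in G.2 /\ (v (idx a.+1)).1 = (v (idx a)).1.
Proof. by have := trav.2 (idx a); rewrite /= odd_mod ?odd_double // ordS_mod. Qed.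

Lemma traversal_first q : v (idx (2 * q)) \in G.1.
Proof. by have := traversal_step (2 * q); rewrite oddM => -[]. Qed.

Lemma traversal_corner a :
  v (idx a) = ((v (idx (2 * ((a + 1) %/ 2)))).1, (v (idx (2 * (a %/ 2)))).2).
Proof.
have := traversal_step a; have := traversal_step (2 * (a %/ 2)).
rewrite oddM /=; case: (boolP (odd a)) => a_odd [_ row] [_ col].
- have -> : 2 * ((a + 1) %/ 2) = a.+1.
    by move: a_odd; rewrite -[a in odd a](odd_double_half a) -divn2; lia.
  have e : a = (2 * (a %/ 2)).+1.
    by move: a_odd; rewrite -[a in odd a](odd_double_half a) -divn2; lia.
  by rewrite col {1 2}e -row; case: (v _).
- have e : a = 2 * (a %/ 2).
    by move: a_odd; rewrite -[a in odd a](odd_double_half a) -divn2; lia.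
  have -> : (a + 1) %/ 2 = a %/ 2 by rewrite {1}e; lia.
  by rewrite -e; case: (v _).
Qed.

Lemma ord_mod_double_inj q q' :
  v (idx (2 * q)) = v (idx (2 * q')) -> q = q' %[mod n].
Proof.
move=> /trav.1 /(congr1 val); rewrite /= -mul2n -!muln_modr => e.
by apply/eqP; rewrite -(eqn_pmul2l (isT : 0 < 2)); apply/eqP.
Qed.

Lemma traversal_image r : one_per_line G.1 -> one_per_line G.2 ->
  [set v (idx (2 * i + r)) | i : 'I_n] = if odd r then G.2 else G.1.
Proof.
move=> o1 o2; have inS i : v (idx (2 * i + r)) \in (if odd r then G.2 else G.1).
  by have := traversal_step (2 * i + r); rewrite oddD oddM /=; case: (odd r) => -[].
apply: (one_per_line_imset (f := fun i : 'I_n => v (idx (2 * i + r)))) => //.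
  by case: ifP.
move=> i j /trav.1 /(congr1 val) /= /eqP; rewrite eqn_modDr -mul2n -!muln_modr.
by rewrite !modn_small ?ltn_ord // eqn_mul2l /= => /eqP /ord_inj.
Qed.

End Traversal.

Section Interleaving.

Variables (n : nat) (n2_gt0 : 0 < n.*2) (Gwy Gzx : grid n).
Variables (v u : 'I_(n.*2) -> cell n).
Hypotheses (trav_v : traversal Gwy v) (trav_u : traversal Gzx u).
Hypotheses (ov1 : one_per_line Gwy.1) (ov2 : one_per_line Gwy.2).
Hypotheses (ou1 : one_per_line Gzx.1) (ou2 : one_per_line Gzx.2).
Local Notation idx := (ord_mod n2_gt0).

(* [coord c q] is w_q, x_q, y_q or z_(q+1). The [y]-th marking has label [y mod 4] and
   reads coordinate [c] at index [(y + 3 - c) / 4], which grows exactly when a marking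
   labelled [c] is left. *)
Definition coord (c : 'I_4) (q : nat) : 'I_n :=
  nth (v (idx 0)).1 [:: (v (idx (2 * q))).1; (u (idx (2 * q))).2;
                        (v (idx (2 * q))).2; (u (idx (2 * q.+1))).1] c.

Definition mark (y : nat) : 'I_4 * hpt n :=
  (inZp y, [ffun c : 'I_4 => coord c ((y + (3 - c)) %/ 4)]).

Definition hypercube : marking_fn n :=
  fun l => [set (mark y).2 | y : 'I_(4 * n) & (mark y).1 == l].

Lemma coord_inj c q q' : coord c q = coord c q' -> q = q' %[mod n].
Proof.
have first_v := traversal_first n2_gt0 trav_v.
have first_u := traversal_first n2_gt0 trav_u.
case: (ord4P c) => [->|[->|[->|->]]] /= e.
- exact/(ord_mod_double_inj trav_v)/(fiber_card1_inj ov1.2 (first_v q) (first_v q')).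
- exact/(ord_mod_double_inj trav_u)/(fiber_card1_inj ou1.1 (first_u q) (first_u q')).
- exact/(ord_mod_double_inj trav_v)/(fiber_card1_inj ov1.1 (first_v q) (first_v q')).
- apply/eqP; rewrite -(eqn_modDr 1) !addn1; apply/eqP.
  apply/(ord_mod_double_inj trav_u).
  exact: (fiber_card1_inj ou1.2 (first_u q.+1) (first_u q'.+1)).
Qed.

Lemma coord_periodic c q : coord c (q + n) = coord c q.
Proof. by rewrite /coord -addSn !mulnDr (mul2n n) !ord_mod_periodic. Qed.

Lemma mark_labelS y : (mark y.+1).1 = ((mark y).1 + 1)%R.
Proof. by apply: val_inj => /=; lia. Qed.

Lemma mark_periodic y : mark (y + 4 * n) = mark y.
Proof.
congr pair; first by apply: val_inj => /=; lia.
apply/ffunP => c; rewrite !ffunE.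
have -> : (y + 4 * n + (3 - c)) %/ 4 = (y + (3 - c)) %/ 4 + n by lia.
exact: coord_periodic.
Qed.

Lemma mark_mod y : mark (y %% (4 * n)) = mark y.
Proof.
rewrite {2}(divn_eq y (4 * n)) addnC; elim: (y %/ (4 * n)) => [|k IH].
  by rewrite mul0n addn0.
by rewrite (mulSnr k) addnA mark_periodic.
Qed.

Lemma markings_hypercube : markings hypercube = [set mark y | y : 'I_(4 * n)].
Proof.
apply/setP => -[l p]; rewrite inE /=; apply/imsetP/imsetP => [[y]|[y _ [-> ->]]].
  by rewrite inE => /eqP <- ->; exists y; last by case: (mark y).
by exists y; rewrite ?inE.
Qed.

Lemma hypercube_proj (T : finType) (g : hpt n -> T) l :
  [set g p | p in hypercube l] = [set g (mark (4 * i + l)).2 | i : 'I_n].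
Proof.
rewrite -imset_comp; apply/setP => t; apply/imsetP/imsetP => [[y]|[i _ ->]].
  rewrite inE -val_eqE /= => /eqP yl ->; have := ltn_ord y.
  move=> y4n; have i_lt : y %/ 4 < n by lia.
  by exists (Ordinal i_lt) => //=; congr (g (mark _).2); lia.
have := ltn_ord i; have := ltn_ord l => l4 i_lt.
have y_lt : 4 * i + l < 4 * n by lia.
by exists (Ordinal y_lt); rewrite // inE -val_eqE /=; apply/eqP; lia.
Qed.

Lemma wy_mark y :
  ((mark y).2 cw, (mark y).2 cy) = v (idx ((y + 3) %/ 4 + (y + 1) %/ 4)).
Proof.
rewrite !ffunE /= (traversal_corner n2_gt0 trav_v).
by congr pair; [congr (v (idx _)).1 | congr (v (idx _)).2]; lia.
Qed.

Lemma zx_mark y :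
  ((mark y).2 cz, (mark y).2 cx) = u (idx ((y %/ 4).+1 + (y + 2) %/ 4)).
Proof.
rewrite !ffunE /= (traversal_corner n2_gt0 trav_u).
by congr pair; [congr (u (idx _)).1 | congr (u (idx _)).2]; lia.
Qed.

Lemma proj_wy_hypercube : proj_wy hypercube = Gwy.
Proof.
rewrite /proj_wy !hypercube_proj [Gwy]surjective_pairing; congr pair.
  have /= <- := traversal_image n2_gt0 trav_v 0 ov1 ov2.
  by apply: eq_imset => i; rewrite wy_mark; congr (v (idx _)); lia.
have /= <- := traversal_image n2_gt0 trav_v 1 ov1 ov2.
by apply: eq_imset => i; rewrite wy_mark; congr (v (idx _)); lia.
Qed.

Lemma proj_zx_hypercube : proj_zx hypercube = Gzx.
Proof.
rewrite /proj_zx !hypercube_proj [Gzx]surjective_pairing; congr pair.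
  have /= <- := traversal_image n2_gt0 trav_u 2 ou1 ou2.
  by apply: eq_imset => i; rewrite zx_mark; congr (u (idx _)); lia.
have /= <- := traversal_image n2_gt0 trav_u 1 ou1 ou2.
by apply: eq_imset => i; rewrite zx_mark; congr (u (idx _)); lia.
Qed.

Hypothesis n_gt1 : 1 < n.

Lemma mark_stepS y c : ((mark y.+1).2 c != (mark y).2 c) = (c == (mark y).1).
Proof.
rewrite !ffunE (_ : (c == _) = (c == y %% 4 :> nat)) //; have c4 := ltn_ord c.
have [e|ne] := eqVneq (c : nat) (y %% 4).
- have -> : (y.+1 + (3 - c)) %/ 4 = ((y + (3 - c)) %/ 4).+1 by lia.
  apply/negP => /eqP /coord_inj /eqP.
  by rewrite -addn1 -[X in _ == X %[mod n]]addn0 eqn_modDl mod0n modn_small.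
- have -> : (y.+1 + (3 - c)) %/ 4 = (y + (3 - c)) %/ 4 by lia.
  by rewrite eqxx; apply/esym/negbTE.
Qed.

Lemma cube_marks d b : b < n ->
  [set m in markings hypercube | m.2 d == coord d b] =
  cube mark (4 * (b + n) - (3 - d)).
Proof.
move=> bn; have d4 := ltn_ord d.
apply/setP => m; rewrite markings_hypercube inE; apply/andP/imsetP.
- case=> /imsetP [y _ ->]; rewrite ffunE => /eqP /coord_inj; rewrite (modn_small bn) => hq.
  have y4n := ltn_ord y; have i4 : (y + (3 - d)) %% 4 < 4 by rewrite ltn_pmod.
  exists (Ordinal i4) => //=.
  have [q_lt|q_n] : (y + (3 - d)) %/ 4 < n \/ (y + (3 - d)) %/ 4 = n by lia.
    rewrite modn_small // in hq.
    by rewrite (_ : _ + _ = y + 4 * n) ?mark_periodic //; lia.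
  rewrite q_n modnn in hq.
  by congr mark; lia.
- case=> i _ ->; split.
    have n4 : 0 < 4 * n by lia.
    by apply/imsetP; exists (Ordinal (ltn_pmod (4 * (b + n) - (3 - d) + i) n4)); rewrite ?mark_mod.
  rewrite ffunE -[in X in _ == X]coord_periodic.
  by have -> : (4 * (b + n) - (3 - d) + i + (3 - d)) %/ 4 = b + n by have := ltn_ord i; lia.
Qed.

Lemma coord_onto d (j : 'I_n) : exists2 b, b < n & coord d b = j.
Proof.
have inj : injective (fun i : 'I_n => coord d i).
  by move=> i i' /coord_inj; rewrite !modn_small //; apply: ord_inj.
by have /codomP [i ->] := injF_onto inj j; exists i.
Qed.

Lemma hypercube_cube d j : exists y0,
  [set m in markings hypercube | m.2 d == j] = cube mark y0 /\
  ((mark y0).1 + 3%:R)%R = d.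
Proof.
have [b bn <-] := coord_onto d j; exists (4 * (b + n) - (3 - d)).
by rewrite cube_marks //; split => //; apply: val_inj => /=; have := ltn_ord d; lia.
Qed.

Lemma hypercube_marking_conditions : marking_conditions hypercube.
Proof.
have flatE d j e k y0 : [set m in markings hypercube | m.2 d == j] = cube mark y0 ->
    flat_marks hypercube d j e k = [set m in cube mark y0 | m.2 e == k].
  by move=> cubeE; rewrite -cubeE; apply/setP => m; rewrite !inE andbA.
split; [|split].
- move=> l d j; have [y0 [cubeE _]] := hypercube_cube d j.
  rewrite -[RHS](cube_label_card mark_labelS y0 l) -cubeE.
  have pair_inj : injective (pair l : hpt n -> _) by move=> p q [].
  rewrite -(card_imset _ pair_inj).
  apply: eq_card => -[l' p]; rewrite !inE /=; apply/imsetP/andP => [[q]|[/andP [pl pj] /eqP el]].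
    by rewrite inE => /andP [ql qj] [-> ->]; rewrite ql qj eqxx.
  by subst l'; exists p; rewrite ?inE ?pl.
- move=> d j; have [y0 [cubeE ld]] := hypercube_cube d j.
  rewrite -[RHS](cube_three_flats mark_labelS mark_stepS y0) ld.
  by apply: eq_card => -[e k]; rewrite !inE /= (flatE _ _ _ _ _ cubeE).
- move=> d e j k de; have [y0 [cubeE ld]] := hypercube_cube d j.
  rewrite (flatE _ _ _ _ _ cubeE) => c3.
  have [|y [flat3 F3]] := cube_flat_shape mark_labelS mark_stepS _ c3; first by rewrite ld eq_sym.
  exists (mark y.+1), (mark y), (mark y.+2); split => //; split.
    exact: (mark_right_angle mark_labelS mark_stepS).
  by rewrite /= -ld F3; have [] := vertex_label (mark y.+1).1.
Qed.

End Interleaving.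

Lemma immersed_grid_gt1 n (G : grid n) : immersed_grid G -> 1 < n.
Proof.
case=> n_gt0 [_ [_ [disj [v trav]]]]; case: (ltnP 1 n) => // n_le1.
have n2_gt0 : 0 < n.*2 by rewrite double_gt0.
have cell_eq (p q : cell n) : p = q.
  case: p q => [a b] [c d]; congr pair; apply: ord_inj;
  by move: (ltn_ord a) (ltn_ord b) (ltn_ord c) (ltn_ord d); lia.
have [v0 _] := traversal_step n2_gt0 trav 0; have [v1 _] := traversal_step n2_gt0 trav 1.
have : v (ord_mod n2_gt0 0) \in G.1 :&: G.2.
  by rewrite inE v0 [v (ord_mod _ 0)](cell_eq _ (v (ord_mod n2_gt0 1))) v1.
by rewrite disj inE.
Qed.

Lemma crossings_separated_sym (R : realType) n (G G' : grid n) :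
  crossings_separated R G G' -> crossings_separated R G' G.
Proof. by move=> sep w w' tw tw' *; rewrite eq_sym; apply: sep. Qed.

Unset Implicit Arguments.

Theorem theorem8p4 (R : realType) (n : nat) (Gwy Gzx : grid n) :
  lagrangian_grid R Gwy -> lagrangian_grid R Gzx ->
  crossings_separated R Gwy Gzx ->
  exists mk : marking_fn n,
    lagrangian_hypercube R mk /\ proj_wy mk = Gwy /\ proj_zx mk = Gzx.
Proof.
move=> lag_wy lag_zx sep.
have [[n_gt0 [ov1 [ov2 [_ [v trav_v]]]]] _] := lag_wy.
have [[_ [ou1 [ou2 [_ [u trav_u]]]]] _] := lag_zx.
have n2_gt0 : 0 < n.*2 by rewrite double_gt0.
have n_gt1 := immersed_grid_gt1 lag_wy.1.
have proj_wy := proj_wy_hypercube n2_gt0 u trav_v ov1 ov2.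
have proj_zx := proj_zx_hypercube n2_gt0 v trav_u ou1 ou2.
exists (hypercube n2_gt0 v u); split=> //.
rewrite /lagrangian_hypercube proj_wy proj_zx.
have conds := hypercube_marking_conditions n2_gt0 trav_v trav_u ov1 ou1 n_gt1.
split; first exact: conds.
by split=> //; split=> //; apply: crossings_separated_sym.
Qed.
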